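(* Let $G$ be a digraph and let $\alpha^{(n+1)}>\gamma^{(n)}>\beta^{(n-1)}$ be allowed elementary paths on $G$ (of lengths $n+1,n,n-1$) such that their starting vertices are not all the same or their end vertices are not all the same. Write $\alpha=v_0v_1\cdots v_{n+1}$. Then either (a) there exists an allowed elementary $n$-path $\gamma'\neq\gamma$ with $\alpha>\gamma'>\beta$; or (b) $\beta$ is obtained from $\alpha$ by removing $v_0\to v_1$ or by removing $v_n\to v_{n+1}$.
   Context: A digraph $G=(V,E)$ consists of a set $V$ and $E\subseteq(V\times V)\setminus\{(v,v)\}$; $(u,v)\in E$ is written $u\to v$. An allowed elementary $n$-path is a sequence $v_0\cdots v_n$ of vertices with $v_{i-1}\to v_i\in E$ for $1\le i\le n$. For allowed elementary paths, $\gamma'<\gamma$ (equivalently $\gamma>\gamma'$) means $\gamma'$ is obtained from $\gamma$ by deleting some of its entries. *)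

From mathcomp Require Import all_boot.
Set Implicit Arguments. Unset Strict Implicit. Unset Printing Implicit Defensive.

(* A digraph is a vertex type V (with decidable equality) and an edge
   relation E : rel V, assumed irreflexive (no loops). *)

Definition allowed_path (V : eqType) (E : rel V) (n : nat) (p : seq V) : bool :=
  (size p == n.+1) && (if p is x :: s then path E x s else false).

Definition path_lt (V : eqType) (g' g : seq V) : bool :=
  subseq g' g && (size g' < size g).

Definition start_vertex (V : eqType) (p : seq V) : option V := ohead p.
Definition end_vertex (V : eqType) (p : seq V) : option V := ohead (rev p).

From mathcomp Require Import all_boot zify.

Set Implicit Arguments.
Unset Strict Implicit.
Unset Printing Implicit Defensive.

(* gamma and beta arise from alpha by deleting two vertices x and y, so
   alpha = A x B y C and beta = A B C, while gamma is A B y C or A x B C.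
   If B is nonempty, the other of these two is again an allowed path:
   each of its edges is an edge of alpha or of beta, and it differs from
   gamma because its vertex at position |A| is the head of B on one side
   and x on the other, and x -> head B is not a loop.  If B is empty, the
   deleted vertices are adjacent; unless A or C is empty, which is
   alternative (b), gamma and beta then share the endpoints of alpha. *)

Lemma subseq_size_succ (T : eqType) (s t : seq T) :
  subseq s t -> size t = (size s).+1 -> exists p x q, t = p ++ x :: q /\ s = p ++ q.
Proof.
elim: t s => [|x t IHt] [|y s] //=.
  by case: t IHt => // _ _ _; exists [::], x, [::].
case: eqP => [-> sub_st [size_ts]|_ sub_st [size_ts]].
  have [p [z [q [-> ->]]]] := IHt s sub_st size_ts.
  by exists (x :: p), z, q.
have /eqP <- : y :: s == t by rewrite -(size_subseq_leqif sub_st).2 /= size_ts.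
by exists [::], x, (y :: s).
Qed.

Lemma cat_eq_cat_cons (T : Type) (p q p' q' : seq T) z :
  p ++ q = p' ++ z :: q' ->
  (exists r, p = p' ++ z :: r /\ q' = r ++ q) \/
  (exists r, p' = p ++ r /\ q = r ++ z :: q').
Proof.
elim: p p' => [|a p IHp] p' /=; first by move=> ->; right; exists p'.
case: p' => [|b p'] /= [-> eq_pq]; first by left; exists p.
by case: (IHp p' eq_pq) => [[r [-> ->]]|[r [-> ->]]]; [left|right]; exists r.
Qed.

Lemma subseq_size_succ2 (T : eqType) (s t u : seq T) :
  subseq t u -> size u = (size t).+1 -> subseq s t -> size t = (size s).+1 ->
  exists A x B y C, [/\ u = A ++ x :: B ++ y :: C, s = A ++ B ++ C &
                        t = A ++ B ++ y :: C \/ t = A ++ x :: B ++ C].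
Proof.
move=> sub_tu size_u sub_st size_t.
have [p [x [q [-> def_t]]]] := subseq_size_succ sub_tu size_u.
have [p' [z [q' [def_t' ->]]]] := subseq_size_succ sub_st size_t.
have [[r [def_p def_q']]|[r [def_p' def_q]]] :=
  cat_eq_cat_cons (etrans (esym def_t) def_t').
  exists p', z, r, x, q; rewrite def_p def_q' -catA.
  by split; last by right; rewrite def_t def_p -catA.
exists p, x, r, z, q'; rewrite def_p' def_q -catA.
by split; last by left; rewrite def_t def_q.
Qed.

Lemma sorted_glue (T : Type) (e : rel T) s s' t t' x :
  sorted e (s ++ x :: t') -> sorted e (s' ++ x :: t) -> sorted e (s ++ x :: t).
Proof. by rewrite !sorted_cat_cons => /andP[-> _] /andP[_ ->]. Qed.

Lemma end_vertex_rcons (T : eqType) (s : seq T) x : end_vertex (rcons s x) = Some x.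
Proof. by rewrite /end_vertex rev_rcons. Qed.

Lemma endpoints_adjacent_deletion (T : eqType) (A C : seq T) x y gamma :
  A != [::] -> C != [::] -> gamma = A ++ y :: C \/ gamma = A ++ x :: C ->
  (start_vertex (A ++ x :: y :: C) = start_vertex gamma /\
   start_vertex gamma = start_vertex (A ++ C)) /\
  (end_vertex (A ++ x :: y :: C) = end_vertex gamma /\
   end_vertex gamma = end_vertex (A ++ C)).
Proof.
case: A => // a A _; case/lastP: C => // C c _.
by case=> ->; rewrite -!rcons_cons -!rcons_cat !end_vertex_rcons.
Qed.

Lemma adjacent_deletion_at_end (T : eqType) n (A C : seq T) x y gamma :
  size (A ++ x :: y :: C) = n.+2 -> gamma = A ++ y :: C \/ gamma = A ++ x :: C ->
  (~ (start_vertex (A ++ x :: y :: C) = start_vertex gamma /\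
      start_vertex gamma = start_vertex (A ++ C)) \/
   ~ (end_vertex (A ++ x :: y :: C) = end_vertex gamma /\
      end_vertex gamma = end_vertex (A ++ C))) ->
  A ++ C = drop 2 (A ++ x :: y :: C) \/ A ++ C = take n (A ++ x :: y :: C).
Proof.
move=> size_alpha def_gamma distinct_ends.
case: (eqVneq A [::]) => [-> | A_ne0]; first by left; rewrite /= drop0.
case: (eqVneq C [::]) => [C0 | C_ne0].
  right; rewrite C0 cats0 take_size_cat //.
  by move: size_alpha; rewrite C0 size_cat /=; lia.
have [same_starts same_ends] := endpoints_adjacent_deletion A_ne0 C_ne0 def_gamma.
by case: distinct_ends.
Qed.

Section DeletionsInAllowedPaths.

Variables (V : eqType) (E : rel V).
Hypothesis irr_E : irreflexive E.

Lemma allowed_pathE n p : allowed_path E n p = (size p == n.+1) && sorted E p.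
Proof. by case: p. Qed.

Lemma path_lt_cat_cons (p q : seq V) x : path_lt (p ++ q) (p ++ x :: q).
Proof.
by rewrite /path_lt cat_subseq ?subseq_refl ?subseq_cons // !size_cat /= addnS.
Qed.

Lemma other_intermediate_path n A x b B y C gamma :
  size (A ++ x :: b :: B ++ y :: C) = n.+2 ->
  sorted E (A ++ x :: b :: B ++ y :: C) -> sorted E (A ++ b :: B ++ C) ->
  gamma = A ++ b :: B ++ y :: C \/ gamma = A ++ x :: b :: B ++ C ->
  exists gamma',
    [/\ allowed_path E n gamma', gamma' <> gamma,
        path_lt gamma' (A ++ x :: b :: B ++ y :: C) &
        path_lt (A ++ b :: B ++ C) gamma'].
Proof.
move=> size_alpha sorted_alpha sorted_beta def_gamma.
have sorted_alpha_r : sorted E (rcons A x ++ b :: B ++ y :: C).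
  by rewrite cat_rcons.
have del_x_lt : path_lt (A ++ b :: B ++ y :: C) (A ++ x :: b :: B ++ y :: C).
  exact: path_lt_cat_cons.
have del_y_lt : path_lt (A ++ x :: b :: B ++ C) (A ++ x :: b :: B ++ y :: C).
  by have := path_lt_cat_cons (A ++ x :: b :: B) C y; rewrite -!catA.
have beta_lt_x : path_lt (A ++ b :: B ++ C) (A ++ b :: B ++ y :: C).
  by have := path_lt_cat_cons (A ++ b :: B) C y; rewrite -!catA.
have beta_lt_y : path_lt (A ++ b :: B ++ C) (A ++ x :: b :: B ++ C).
  exact: path_lt_cat_cons.
have allowed_del_x : allowed_path E n (A ++ b :: B ++ y :: C).
  rewrite allowed_pathE; apply/andP; split.
    by move: size_alpha; rewrite !size_cat /= !size_cat /=; lia.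
  exact: sorted_glue sorted_beta sorted_alpha_r.
have allowed_del_y : allowed_path E n (A ++ x :: b :: B ++ C).
  rewrite allowed_pathE; apply/andP; split.
    by move: size_alpha; rewrite !size_cat /= !size_cat /=; lia.
  by rewrite -cat_rcons; apply: sorted_glue sorted_alpha_r sorted_beta.
have edge_xb : E x b.
  by move: sorted_alpha; rewrite sorted_cat_cons => /and3P[].
have neq_dels : A ++ b :: B ++ y :: C <> A ++ x :: b :: B ++ C.
  move/(congr1 (drop (size A))); rewrite !drop_size_cat // => -[eq_bx _].
  by move: edge_xb; rewrite eq_bx irr_E.
case: def_gamma => ->.
  by exists (A ++ x :: b :: B ++ C); split => // /esym.
by exists (A ++ b :: B ++ y :: C).
Qed.

End DeletionsInAllowedPaths.

Theorem lemma2p2 (V : eqType) (E : rel V) (HE : irreflexive E)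
  (n : nat) (Hn : 0 < n) (alpha gamma beta : seq V) :
  allowed_path E n.+1 alpha ->
  allowed_path E n gamma ->
  allowed_path E n.-1 beta ->
  path_lt gamma alpha ->
  path_lt beta gamma ->
  (~ (start_vertex alpha = start_vertex gamma /\
      start_vertex gamma = start_vertex beta) \/
   ~ (end_vertex alpha = end_vertex gamma /\
      end_vertex gamma = end_vertex beta)) ->
  (exists gamma' : seq V,
      [/\ allowed_path E n gamma', gamma' <> gamma,
          path_lt gamma' alpha & path_lt beta gamma'])
  \/ beta = drop 2 alpha \/ beta = take n alpha.
Proof.
rewrite !allowed_pathE prednK //.
move=> /andP[/eqP size_alpha sorted_alpha] /andP[/eqP size_gamma _].
move=> /andP[/eqP size_beta sorted_beta] /andP[sub_gamma _] /andP[sub_beta _].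
have size_ag : size alpha = (size gamma).+1 by rewrite size_alpha size_gamma.
have size_gb : size gamma = (size beta).+1 by rewrite size_gamma size_beta.
have [A [x [B [y [C [def_alpha def_beta def_gamma]]]]]] :=
  subseq_size_succ2 sub_gamma size_ag sub_beta size_gb.
rewrite {}def_alpha {}def_beta in size_alpha sorted_alpha sorted_beta * => ends.
case: B => [|b B] in def_gamma size_alpha sorted_alpha sorted_beta ends *.
  by right; apply: adjacent_deletion_at_end ends.
by left; apply: other_intermediate_path.
Qed.
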